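(* Let $(\vec U,\le,{}^*,\vee,\wedge)$ be a universe of separations containing a finite separation system $(\vec S,\le,{}^* )$ (with the induced order and involution). Let $\mathcal F\subseteq 2^{\vec S}$ be a standard set of stars, and suppose $\vec S$ is $\mathcal F$-separable. Then exactly one of the following holds: (i) there exists an $S$-tree over $\mathcal F$; (ii) there exists an $\mathcal F$-tangle of $S$.
   Context: A separation system $(\vec S,\le,{}^* )$ is a partially ordered set with an order-reversing involution ${}^*$ ($\vec r\le\vec s\iff\vec r^{\,*}\ge\vec s^{\,*}$); write $\overleftarrow s:=\vec s^{\,*}$, a separation is $s=\{\vec s,\overleftarrow s\}$, $S$ is the set of separations, $s$ is degenerate if $\vec s=\overleftarrow s$, and $\vec r$ is trivial in $\vec S$ if there is $s\in S$ with $\vec r<\vec s$ and $\vec r<\overleftarrow s$. A star is a nonempty $\sigma\subseteq\vec S$ with $\vec r\le\overleftarrow s$ for all distinct $\vec r,\vec s\in\sigma$. A universe of separations is a separation system in which any two elements have a supremum $\vee$ and infimum $\wedge$. An orientation of $S$ contains exactly one of $\vec s,\overleftarrow s$ for each $s\in S$; a set $O\subseteq\vec S$ is consistent if there are no distinct $r,s\in S$ with orientations $\vec r<\vec s$ such that $\overleftarrow r,\vec s\in O$; $O$ avoids $\mathcal F$ if no subset of $O$ is in $\mathcal F$; an $\mathcal F$-tangle of $S$ is a consistent orientation of $S$ avoiding $\mathcal F$. $\mathcal F$ forces $\vec r$ if $\{\overleftarrow r\}\in\mathcal F$ or $r$ is degenerate; $\mathcal F$ is standard if it forces every trivial element of $\vec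 S$ (so every element not forced by a standard $\mathcal F$ is nontrivial and nondegenerate). An $S$-tree is a pair $(T,\alpha)$, $T$ a finite tree with at least one edge, $\alpha:\vec E(T)\to\vec S$ with $\alpha(y,x)=\alpha(x,y)^*$; it is over $\mathcal F$ if $\alpha(\{(y,t):yt\in E(T)\})\in\mathcal F$ for every node $t$. For nontrivial nondegenerate $\vec r\in\vec S$, $\vec S_{\ge\vec r}$ is the set of all orientations of those $s\in S$ having an orientation $\ge\vec r$; for $\vec s_0\ge\vec r$ the shifting map $f^{\vec r}_{\vec s_0}:\vec S_{\ge\vec r}\to\vec U$ is given by $f(\vec s)=\vec s\vee\vec s_0$, $f(\overleftarrow s)=(\vec s\vee\vec s_0)^*$ for all $\vec s\in\vec S_{\ge\vec r}\setminus\{\overleftarrow r\}$ with $\vec s\ge\vec r$. $\vec s_0\in\vec S$ is linked to $\vec r$ if $\vec s_0\ge\vec r$ and $\vec s\vee\vec s_0\in\vec S$ for all $\vec s\in\vec S$ with $\vec s\ge\vec r$, $\vec s\neq\overleftarrow r$; it is $\mathcal F$-linked to $\vec r$ if moreover $f^{\vec r}_{\vec s_0}(\sigma)\in\mathcal F$ for every star $\sigma\in\mathcal F$ with $\sigma\subseteq\vec S_{\ge\vec r}\setminus\{\overleftarrow r\}$ having an element $\ge\vec r$. $\vec S$ is $\mathcal F$-separable if for all $\vec r,\vec r\,'\in\vec S$ with $\vec r\le\vec r\,'$ such that $\mathcal F$ forces neither $\vec r$ nor $\overleftarrow{r'}$, there is $s_0\in S$ with an orientation $\vec s_0$ that is $\mathcal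 F$-linked to $\vec r$ and such that $\overleftarrow s_0$ is $\mathcal F$-linked to $\overleftarrow{r'}$. *)

From Stdlib Require List.
From mathcomp Require Import all_boot.
Set Implicit Arguments.
Unset Strict Implicit.
Unset Printing Implicit Defensive.

Section Separations.
Variable U : Type.
Variable le : U -> U -> Prop.
Variable star : U -> U.
Variable join meet : U -> U -> U.

Definition lt (x y : U) : Prop := le x y /\ x <> y.

Definition is_universe : Prop :=
  (forall x, le x x) /\
  (forall x y, le x y -> le y x -> x = y) /\
  (forall x y z, le x y -> le y z -> le x z) /\
  (forall x, star (star x) = x) /\
  (forall x y, le x y <-> le (star y) (star x)) /\
  (forall x y, le x (join x y) /\ le y (join x y) /\
     forall z, le x z -> le y z -> le (join x y) z) /\
  (forall x y, le (meet x y) x /\ le (meet x y) y /\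
     forall z, le z x -> le z y -> le z (meet x y)).

Variable Sv : U -> Prop.

Definition is_subsystem : Prop := forall x, Sv x -> Sv (star x).

Definition finite_sys : Prop := exists l : list U, forall x, Sv x -> Stdlib.Lists.List.In x l.

Definition degenerate (x : U) : Prop := x = star x.

Definition trivial_in (x : U) : Prop :=
  exists s, Sv s /\ lt x s /\ lt x (star s).

Definition is_star (sigma : U -> Prop) : Prop :=
  (exists x, sigma x) /\
  forall x y, sigma x -> sigma y -> x <> y -> le x (star y).

Variable F : (U -> Prop) -> Prop.

Definition forces (x : U) : Prop :=
  F (fun u => u = star x) \/ degenerate x.

Definition standard : Prop := forall x, Sv x -> trivial_in x -> forces x.

Definition orientation (O : U -> Prop) : Prop :=
  (forall x, O x -> Sv x) /\
  forall x, Sv x -> (O x \/ O (star x)) /\ (x <> star x -> ~ (O x /\ O (star x))).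

(* no distinct separations r, s with orientations r < s and r*, s in O
   (a := r*, b := s) *)
Definition consistent (O : U -> Prop) : Prop :=
  ~ exists a b, O a /\ O b /\ lt (star a) b /\ ~ (b = a \/ b = star a).

Definition avoids (O : U -> Prop) : Prop :=
  ~ exists sigma, F sigma /\ forall x, sigma x -> O x.

Definition tangle (O : U -> Prop) : Prop :=
  orientation O /\ consistent O /\ avoids O.

Definition is_tree (V : finType) (e : rel V) : Prop :=
  symmetric e /\ irreflexive e /\ (forall x y, connect e x y) /\
  forall p : seq V, ~~ (ucycleb e p && (2 < size p)).

Definition exists_S_tree_over : Prop :=
  exists (V : finType) (e : rel V) (alpha : V -> V -> U),
    is_tree e /\ (exists x y, e x y) /\
    (forall x y, e x y -> Sv (alpha x y) /\ alpha y x = star (alpha x y)) /\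
    forall t : V, F (fun u => exists y, e y t /\ u = alpha y t).

Definition S_geq (r : U) (x : U) : Prop := Sv x /\ (le r x \/ le r (star x)).

(* graph of the shifting map f^r_{s0} *)
Definition shift_rel (r s0 x u : U) : Prop :=
  (le r x /\ x <> star r /\ u = join x s0) \/
  (le r (star x) /\ star x <> star r /\ u = star (join (star x) s0)).

Definition linked (s0 r : U) : Prop :=
  le r s0 /\ forall s, Sv s -> le r s -> s <> star r -> Sv (join s s0).

Definition F_linked (s0 r : U) : Prop :=
  linked s0 r /\
  forall sigma, is_star sigma -> F sigma ->
    (forall x, sigma x -> S_geq r x /\ x <> star r) ->
    (exists x, sigma x /\ le r x) ->
    F (fun u => exists x, sigma x /\ shift_rel r s0 x u).

Definition F_separable : Prop :=
  forall r r', Sv r -> Sv r' -> le r r' -> ~ forces r -> ~ forces (star r') ->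
    exists s0, Sv s0 /\ F_linked s0 r /\ F_linked (star s0) (star r').

End Separations.

From mathcomp Require Import all_boot zify.
From Stdlib Require Import Classical ClassicalEpsilon FunctionalExtensionality PropExtensionality.
Set Implicit Arguments.
Unset Strict Implicit.

(* A separation [w] is rooted when an S-tree over F hangs off an extra edge labelled [w];
   if both [w] and [star w] are rooted, gluing the two trees along that edge gives an
   S-tree over F. Otherwise the shifting maps provided by F-separability show that no two
   rooted separations point away from each other, and that a member [x] of a star in F lies
   above a rooted separation as soon as [star y] does for every other member [y]. If every
   separation has an orientation above a rooted one, the orientations that are not form an
   F-tangle. If not, pick a minimal undecided [x]: adding to F the singletons [{z}] with
   [star x <= z] forces [x], keeps F standard and separable and creates no rooted pair, so
   we conclude by induction on the number of unforced separations.
   Conversely, a tangle avoids every node star of an S-tree, so each node has an incoming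
   edge oriented against the tangle; following these edges walks through the finite tree
   without ever turning back, which is impossible. *)

Definition propb (P : Prop) : bool := if excluded_middle_informative P then true else false.

Lemma propbP (P : Prop) : reflect P (propb P).
Proof. by rewrite /propb; case: excluded_middle_informative => h; constructor. Qed.

Definition count_in (T : Type) (l : list T) (P : T -> Prop) : nat := count (fun z => propb (P z)) l.

Lemma count_in_lt (T : Type) (l : list T) (P Q : T -> Prop) z :
  (forall x, P x -> Q x) -> List.In z l -> Q z -> ~ P z -> count_in l P < count_in l Q.
Proof.
move=> PQ; elim: l => //= a l IH [<-|zl] Qz nPz.
  rewrite (introF (propbP _) nPz) (introT (propbP _) Qz) ltnS.
  by apply: sub_count => x /propbP Px; apply/propbP; exact: PQ.
rewrite /count_in /= -addnS; apply: leq_add; last exact: IH.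
by case: (propbP (P a)) => // Pa; rewrite (introT (propbP _) (PQ _ Pa)).
Qed.

Lemma size_filter_lt (T : Type) (L : list T) (p : pred T) y :
  List.In y L -> ~~ p y -> size (filter p L) < size L.
Proof.
elim: L => //= a L IH [<-|yL] py; first by rewrite (negbTE py) ltnS size_filter count_size.
by case: (p a); rewrite /= ltnS ?(ltnW (IH yL py)) ?IH.
Qed.

Lemma pred_eq (T : Type) (P Q : T -> Prop) : (forall u, P u <-> Q u) -> P = Q.
Proof.
by move=> PQ; apply: functional_extensionality => u; apply: propositional_extensionality.
Qed.

Lemma finite_minimal (T : Type) (l : list T) (P : T -> Prop) (R : T -> T -> Prop) x0 :
  (forall x, P x -> List.In x l) -> (forall x y z, R x y -> R y z -> R x z) ->
  (forall x, ~ R x x) -> P x0 -> exists x, P x /\ forall y, P y -> ~ R y x.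
Proof.
move=> Pl Rtr Rirr; have [n] := ubnP (count_in l (R^~ x0)).
elim: n x0 => // n IHn x0; rewrite ltnS => Rn Px0.
case: (classic (exists y, P y /\ R y x0)) => [[y [Py Ryx0]]|x0min]; last first.
  by exists x0; split=> // y Py Ryx0; apply: x0min; exists y.
apply: (IHn y) => //; apply: leq_trans Rn.
apply: (count_in_lt (z := y)) => [z Rzy|||];
  [exact: Rtr Rzy Ryx0 | exact: Pl | exact: Ryx0 | exact: Rirr].
Qed.

Section ParentTree.
Variables (n : nat) (par : nat -> nat).
Hypothesis par_lt : forall i, 0 < i -> i < n -> par i < i.

Definition parent_rel : rel 'I_n :=
  fun i j => (par j == i) && (0 < j) || (par i == j) && (0 < i).

Lemma parent_rel_sym : symmetric parent_rel.
Proof. by move=> i j; rewrite /parent_rel orbC. Qed.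

Lemma parent_rel_irr : irreflexive parent_rel.
Proof.
move=> i; rewrite /parent_rel orbb; apply/negP => /andP [/eqP par_i i_gt0].
by have := par_lt i_gt0 (ltn_ord i); rewrite par_i ltnn.
Qed.

Lemma parent_rel_down i j : parent_rel i j -> j < i -> par i = j /\ 0 < i.
Proof.
case/orP => /andP [/eqP par_ij pos] // ji.
by have := par_lt pos (ltn_ord j); rewrite par_ij; lia.
Qed.

Lemma parent_rel_acyclic (p : seq 'I_n) : ~~ (ucycleb parent_rel p && (2 < size p)).
Proof.
apply/negP => /andP [/andP [cp up] sp].
have [m mp mmax] : exists2 m, m \in p & forall x, x \in p -> x <= m.
  case: p {cp up} sp => // a p _.
  by case: (arg_maxnP val (mem_head a p)) => m mp mmax; exists m.
have par_m x : x \in p -> x != m -> parent_rel m x -> par m = x.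
  move=> xp xm mx; apply: proj1 (parent_rel_down mx _).
  by rewrite ltn_neqAle mmax // andbT.
have [i q epq] := rot_to mp.
have inp x : x \in q -> x \in p by move=> xq; rewrite -(mem_rot i) epq inE xq orbT.
have cq : cycle parent_rel (m :: q) by rewrite -epq rot_cycle.
have uq : uniq (m :: q) by rewrite -epq rot_uniq.
have szq : 2 < size (m :: q) by rewrite -epq size_rot.
case: q {epq} inp cq uq szq => [|a [|c q]] //= inp cq uq _.
case/and4P: uq => m_notin acq _ _.
have ma : m != a by apply: contra m_notin => /eqP ->; exact: mem_head.
have mcq : m \notin c :: q by apply: contra m_notin => mcq; rewrite inE mcq orbT.
case/and3P: cq => ma_edge _; rewrite rcons_path => /andP [_ bm_edge].
set b := last c q in bm_edge.
have bcq : b \in c :: q by exact: mem_last.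
have par_ma : par m = a.
  by apply: par_m; [apply: inp; exact: mem_head | rewrite eq_sym | ].
have par_mb : par m = b.
  apply: par_m; [by apply: inp; rewrite inE bcq orbT | | by rewrite parent_rel_sym].
  by apply: contraNneq mcq => <-.
have ab : a = b by apply: val_inj; rewrite /= -par_ma -par_mb.
by move: acq; rewrite ab bcq.
Qed.

Lemma parent_rel_connect_root (n_gt0 : 0 < n) (i : 'I_n) : connect parent_rel i (Ordinal n_gt0).
Proof.
have [k] := ubnP (val i); elim: k i => // k IHk i; rewrite ltnS => ik.
case: (posnP i) => [i0|i_gt0]; first by have -> : i = Ordinal n_gt0 by exact: val_inj.
have par_i := par_lt i_gt0 (ltn_ord i).
apply: connect_trans (connect1 _) (IHk (Ordinal (ltn_trans par_i (ltn_ord i))) _).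
  by rewrite /parent_rel /= eqxx i_gt0 orbT.
exact: leq_trans par_i ik.
Qed.

Lemma parent_rel_tree (n_gt0 : 0 < n) : is_tree parent_rel.
Proof.
split; first exact: parent_rel_sym.
split; first exact: parent_rel_irr.
split; last exact: parent_rel_acyclic.
move=> i j; apply: connect_trans (parent_rel_connect_root n_gt0 i) _.
by rewrite (sym_connect_sym parent_rel_sym); exact: parent_rel_connect_root.
Qed.

End ParentTree.

Lemma iter_repeat_segment (T : finType) (f : T -> T) (x : T) :
  exists i m, [/\ 0 < m, iter (i + m) f x = iter i f x
                 & uniq [seq iter k f x | k <- iota i m]].
Proof.
pose w k := iter k f x.
have uniq_prefix k : (forall j, j < k -> w j \notin [seq w i | i <- iota 0 j]) ->
    uniq [seq w i | i <- iota 0 k].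
  elim: k => // k IHk fresh.
  rewrite -addn1 iotaD map_cat cat_uniq IHk => [/=|j jk]; last by apply: fresh; exact: ltnW.
  by rewrite add0n orbF andbT fresh.
have ex_rep : exists j, w j \in [seq w i | i <- iota 0 j].
  apply: NNPP => no_rep.
  have := uniq_prefix #|T|.+1 (fun j _ => introN idP (fun h => no_rep (ex_intro _ j h))).
  move/uniq_leq_size => /(_ (enum T) (fun y _ => mem_enum T y)).
  by rewrite size_map size_iota -cardE ltnn.
case: (ex_minnP ex_rep) => j /mapP [i]; rewrite mem_iota add0n => /andP [_ ij] wji jmin.
have [m m_gt0 ej] : exists2 m, 0 < m & j = i + m.
  by exists (j - i); [rewrite subn_gt0 | rewrite subnKC // ltnW].
exists i, m; split=> //; first by rewrite -ej.
have : uniq [seq w k | k <- iota 0 j].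
  by apply: uniq_prefix => k kj; apply/negP => /jmin; rewrite leqNgt kj.
by rewrite ej iotaD map_cat cat_uniq add0n => /and3P [].
Qed.

Lemma tree_walk_backtracks (V : finType) (e : rel V) (s : V -> V) (t0 : V) :
  is_tree e -> (forall t, e (s t) t) -> exists t, s (s t) = t.
Proof.
move=> [e_sym [e_irr [_ e_acyc]]] e_s; apply: NNPP => no_back.
have [i [m [m_gt0 wim w_uniq]]] := iter_repeat_segment s t0.
pose w k := iter k s t0.
have w_edge k : e (w k) (w k.+1) by rewrite e_sym /w iterS.
have w_path k n : path e (w k) [seq w j | j <- iota k.+1 n].
  by elim: n k => //= n IHn k; rewrite -[s (w k)]/(w k.+1) w_edge IHn.
have w_last k n : last (w k) [seq w j | j <- iota k.+1 n] = w (k + n).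
  elim: n k => [|n IHn] k; first by rewrite addn0.
  by rewrite /= -[s (w k)]/(w k.+1) IHn addSnnS.
have m_ne1 : m != 1.
  apply/eqP => m1; move: wim; rewrite m1 addn1 iterS => wi.
  by have := e_s (iter i s t0); rewrite wi e_irr.
have m_ne2 : m != 2.
  apply/eqP => m2; move: wim; rewrite m2 addn2 !iterS => wi.
  by apply: no_back; exists (iter i s t0).
move: (e_acyc [seq w k | k <- iota i m]); apply/negP.
rewrite /ucycleb w_uniq size_map size_iota andbT.
case: m m_gt0 m_ne1 m_ne2 wim {w_uniq} => // m _ m_ne1 m_ne2 wim.
rewrite /= rcons_path w_path w_last /=.
have -> : w i = w (i + m).+1 by rewrite -addnS.
by rewrite w_edge; lia.
Qed.

Section Universe.
Variables (U : Type) (le : U -> U -> Prop) (star : U -> U) (join meet : U -> U -> U).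
Variable Sv : U -> Prop.
Hypothesis univ : is_universe le star join meet.
Hypothesis Sv_star : is_subsystem star Sv.

Lemma le_refl x : le x x. Proof. by case: univ. Qed.
Lemma le_anti x y : le x y -> le y x -> x = y. Proof. by case: univ => _ [anti _]; apply: anti. Qed.
Lemma le_trans x y z : le x y -> le y z -> le x z.
Proof. by case: univ => _ [_ [tr _]]; apply: tr. Qed.
Lemma starK x : star (star x) = x. Proof. by case: univ => _ [_ [_ [invol _]]]. Qed.
Lemma le_star x y : le x y <-> le (star y) (star x).
Proof. by case: univ => _ [_ [_ [_ [rev _]]]]. Qed.

Lemma join_spec x y : le x (join x y) /\ le y (join x y) /\
  forall z, le x z -> le y z -> le (join x y) z.
Proof. by case: univ => _ [_ [_ [_ [_ [join_ok _]]]]]. Qed.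

Lemma join_ubl x y : le x (join x y). Proof. exact: (proj1 (join_spec x y)). Qed.
Lemma join_ubr x y : le y (join x y). Proof. exact: (proj1 (proj2 (join_spec x y))). Qed.

Lemma join_r x y : le x y -> join x y = y.
Proof.
move=> xy; apply: le_anti (join_ubr x y).
by apply: (proj2 (proj2 (join_spec x y))) => //; exact: le_refl.
Qed.

Lemma lt_trans x y z : lt le x y -> lt le y z -> lt le x z.
Proof.
move=> [xy x_ne_y] [yz y_ne_z]; split; first exact: le_trans yz.
by move=> exz; subst z; apply: x_ne_y; exact: le_anti.
Qed.

Lemma star_inj x y : star x = star y -> x = y.
Proof. by move=> e; rewrite -(starK x) e starK. Qed.

Lemma le_starR x y : le x (star y) -> le y (star x).
Proof. by move/le_star; rewrite starK. Qed.

Lemma le_starL x y : le (star x) y -> le (star y) x.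
Proof. by move/le_star; rewrite starK. Qed.

Lemma nontrivial_le_both x z : ~ trivial_in le star Sv x -> Sv z ->
  le x z -> le x (star z) -> z = x \/ z = star x.
Proof.
move=> xnt Sz xz xsz; apply: NNPP => /not_or_and [zx zsx]; apply: xnt.
by exists z; split=> //; split; split=> // e; [apply: zx | apply: zsx; rewrite e starK].
Qed.

(* [rooted F w]: there is an S-tree over [F] with one extra leaf, whose single edge
   points into the tree and is labelled [w]. *)
Inductive rooted (F : (U -> Prop) -> Prop) : U -> Prop :=
  Rooted sigma w : F sigma -> sigma w ->
    (forall y, sigma y -> y <> w -> rooted F (star y)) -> rooted F w.

Definition star_family (F : (U -> Prop) -> Prop) :=
  forall sigma, F sigma -> is_star le star sigma /\ (forall x, sigma x -> Sv x).

Definition above_rooted F x := Sv x /\ exists c, rooted F c /\ le c x.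

Definition undecided F x :=
  [/\ Sv x, ~ above_rooted F x, ~ above_rooted F (star x) & x <> star x].

Definition unrooted F x := Sv x /\ ~ above_rooted F x.

Definition add_above F x sigma :=
  F sigma \/ exists z, Sv z /\ le (star x) z /\ sigma = (fun u => u = z).

Lemma rooted_sub (F G : (U -> Prop) -> Prop) w :
  (forall sigma, F sigma -> G sigma) -> rooted F w -> rooted G w.
Proof. by move=> FG; elim=> {w} sigma w Fs sw _ IH; apply: (Rooted (FG _ Fs) sw). Qed.

Section Rooted.
Variable F : (U -> Prop) -> Prop.
Hypothesis F_stars : star_family F.

Lemma F_Sv sigma x : F sigma -> sigma x -> Sv x.
Proof. by move=> Fs; apply: (proj2 (F_stars Fs)). Qed.

Lemma F_le_star sigma a b : F sigma -> sigma a -> sigma b -> a <> b -> le a (star b).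
Proof. by move=> Fs; apply: (proj2 (proj1 (F_stars Fs))). Qed.

Lemma rooted_Sv w : rooted F w -> Sv w.
Proof. by case=> sigma {}w Fs sw _; exact: F_Sv sw. Qed.

Lemma rooted_forced x : F (fun u => u = star x) -> rooted F (star x).
Proof. by move=> Fx; apply: (Rooted Fx) => // y ->. Qed.

Lemma above_rooted_up x y : above_rooted F x -> Sv y -> le x y -> above_rooted F y.
Proof. by move=> [_ [c [rc cx]]] Sy xy; split=> //; exists c; split=> //; exact: le_trans xy. Qed.

Lemma rooted_above w : rooted F w -> above_rooted F w.
Proof. by move=> rw; split; [exact: rooted_Sv | exists w; split=> //; exact: le_refl]. Qed.

Lemma shift_star x s0 sigma w : ~ trivial_in le star Sv x ->
  F_linked le star join Sv F s0 x -> F sigma -> sigma w -> le x w -> w <> star x ->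
  (forall z, sigma z -> z <> w -> z <> x /\ z <> star x) ->
  exists tau, [/\ F tau, tau (join w s0),
    forall z, sigma z -> z <> w -> tau (star (join (star z) s0)) &
    forall u, tau u -> u = join w s0 \/ exists2 z, sigma z /\ z <> w & u = star (join (star z) s0)].
Proof.
move=> x_nt s0_linked Fs sw xw wsx avoid.
have Sw := F_Sv Fs sw.
have x_others z : sigma z -> z <> w -> le x (star z).
  by move=> sz zw; apply: le_trans xw _; exact: F_le_star Fs sw sz (nesym zw).
exists (fun u => exists z, sigma z /\ shift_rel le star join x s0 z u); split.
- apply: (proj2 s0_linked) => //; first exact: (proj1 (F_stars Fs)).
  + move=> z sz; case: (classic (z = w)) => [->|zw]; first by split=> //; split=> //; left.
    split; last exact: (proj2 (avoid z sz zw)).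
    by split; [exact: F_Sv sz | right; exact: x_others].
  + by exists w.
- by exists w; split=> //; left.
- move=> z sz zw; exists z; split=> //; right; split; first exact: x_others.
  by split=> // /star_inj; exact: (proj1 (avoid z sz zw)).
- move=> u [z [sz]]; case: (classic (z = w)) => [->|zw] [[xz [zsx ->]]|[xsz [szsx ->]]].
  + by left.
  + by case: (nontrivial_le_both x_nt Sw xw xsz) => e; [case: szsx; rewrite e | ].
  + by case: (nontrivial_le_both x_nt (F_Sv Fs sz) xz (x_others z sz zw)) => e;
      case: (avoid z sz zw).
  + by right; exists z.
Qed.

Lemma rooted_shift x s0 : ~ trivial_in le star Sv x -> x <> star x ->
  F_linked le star join Sv F s0 x -> ~ rooted F (star x) ->
  forall w, rooted F w -> le x w -> w <> star x -> rooted F (join w s0).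
Proof.
move=> x_nt x_nd s0_linked not_rsx w rw.
elim: rw => {w} sigma w Fs sw r_others IH xw wsx.
case: (classic (exists y, [/\ sigma y, y <> w & y = x \/ y = star x])) =>
  [[y [sy yw [yx|ysx]]]|avoid].
- by case: not_rsx; rewrite -yx; exact: r_others.
- have wx : w = x.
    by apply: le_anti _ xw; have := F_le_star Fs sw sy (nesym yw); rewrite ysx starK.
  by subst w; have := IH _ sy yw; rewrite ysx starK; apply=> //; exact: le_refl.
have {}avoid z : sigma z -> z <> w -> z <> x /\ z <> star x.
  by move=> sz zw; split=> e; apply: avoid; exists z; split=> //; [left | right].
have [tau [Ftau tau_w _ tau_cases]] := shift_star x_nt s0_linked Fs sw xw wsx avoid.
apply: (Rooted Ftau tau_w) => u tu u_ne; case: (tau_cases u tu) => [//|[z [sz zw] ->]].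
rewrite starK; apply: IH => //.
  by apply: le_trans xw _; exact: F_le_star Fs sw sz (nesym zw).
by move/star_inj; exact: (proj1 (avoid z sz zw)).
Qed.

Lemma rooted_linked x s0 : ~ trivial_in le star Sv x -> x <> star x ->
  F_linked le star join Sv F s0 x -> rooted F x -> ~ rooted F (star x) -> rooted F s0.
Proof.
move=> x_nt x_nd s0_linked rx not_rsx.
rewrite -(join_r (proj1 (proj1 s0_linked))).
exact: (rooted_shift x_nt x_nd s0_linked not_rsx rx (le_refl x) x_nd).
Qed.

Section Separable.
Variable l : list U.
Hypothesis Sv_fin : forall x, Sv x -> List.In x l.
Hypothesis F_std : standard le star Sv F.
Hypothesis F_sep : F_separable le star join Sv F.

Lemma unforced_nontrivial x : Sv x -> ~ forces star F x ->
  ~ trivial_in le star Sv x /\ x <> star x.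
Proof. by move=> Sx x_uf; split=> [x_tr|x_dg]; apply: x_uf; [exact: F_std | right]. Qed.

Hypothesis no_pair : forall w, rooted F w -> ~ rooted F (star w).

Lemma rooted_unforced x : rooted F x -> ~ forces star F x.
Proof. by move=> rx [Fx|x_dg]; apply: (no_pair rx); [exact: rooted_forced | rewrite -x_dg]. Qed.

Lemma separate_rooted y c : Sv y -> ~ forces star F y -> rooted F c -> le y (star c) ->
  exists s0, F_linked le star join Sv F s0 y /\ rooted F (star s0).
Proof.
move=> Sy y_uf rc yc; have Sc := rooted_Sv rc; have c_uf := rooted_unforced rc.
have [|s0 [_ [y_s0 c_s0]]] := F_sep Sy (Sv_star Sc) yc y_uf; first by rewrite starK.
rewrite starK in c_s0; have [c_nt c_nd] := unforced_nontrivial Sc c_uf.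
by exists s0; split=> //; exact: rooted_linked c_nt c_nd c_s0 rc (no_pair rc).
Qed.

Lemma rooted_not_le_star a b : rooted F a -> rooted F b -> ~ le a (star b).
Proof.
move=> ra rb ab; have [Sa a_uf] := (rooted_Sv ra, rooted_unforced ra).
have [s0 [a_s0 rs0]] := separate_rooted Sa a_uf rb ab.
have [a_nt a_nd] := unforced_nontrivial Sa a_uf.
exact: no_pair (rooted_linked a_nt a_nd a_s0 ra (no_pair ra)) rs0.
Qed.

Lemma above_rooted_not_le_star a b : above_rooted F a -> above_rooted F b -> ~ le a (star b).
Proof.
move=> [_ [c [rc ca]]] [_ [d [rd db]]] ab; apply: (rooted_not_le_star rc rd).
by apply: le_trans ca (le_trans ab _); move/le_star: db.
Qed.

Lemma above_rooted_no_pair a : above_rooted F a -> ~ above_rooted F (star a).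
Proof.
by move=> ra rsa; apply: (above_rooted_not_le_star ra rsa); rewrite starK; exact: le_refl.
Qed.

(* [L] lists the [y] whose [star y] is not yet rooted. Such a [y] is separated from a rooted
   [c <= star y]; shifting [sigma] along the separation makes the image of [star y] rooted
   and shortens [L]. *)
Lemma above_rooted_of_star_list L sigma x : F sigma -> sigma x ->
  (forall y, sigma y -> y <> x -> above_rooted F (star y)) ->
  (forall y, sigma y -> y <> x -> ~ rooted F (star y) -> List.In y L) -> above_rooted F x.
Proof.
have [n] := ubnP (size L); elim: n L sigma x => // n IHn L sigma x.
rewrite ltnS => szL Fs sx others bad_in.
case: (classic (exists y, [/\ sigma y, y <> x & ~ rooted F (star y)])) =>
  [[y [sy yx ry]]|all_rooted]; last first.
  apply/rooted_above/(Rooted Fs sx) => y sy yx.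
  by apply: NNPP => ry; apply: all_rooted; exists y.
case: (classic (sigma (star y))) => [s_sy|not_s_sy].
  case: (classic (star y = x)) => [<-|syx]; first exact: others.
  by case: (above_rooted_no_pair (others y sy yx)); have := others _ s_sy syx; rewrite starK.
have Sy := F_Sv Fs sy.
have y_nd : y <> star y by move=> e; apply: not_s_sy; rewrite -e.
have y_uf : ~ forces star F y by case=> [Fy|//]; apply: ry; exact: rooted_forced.
have y_nt := proj1 (unforced_nontrivial Sy y_uf).
have [_ [c [rc c_sy]]] := others y sy yx.
have [s0 [y_s0 rs0]] := separate_rooted Sy y_uf rc (le_starR c_sy).
have avoid z : sigma z -> z <> y -> z <> y /\ z <> star y.
  by move=> sz zy; split=> // e; apply: not_s_sy; rewrite -e.
have [tau [Ftau tau_s0 tau_others tau_cases]] :=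
  shift_star y_nt y_s0 Fs sy (le_refl y) y_nd avoid.
rewrite (join_r (proj1 (proj1 y_s0))) in tau_s0 tau_cases.
set g := fun z => star (join (star z) s0) in tau_others tau_cases.
have join_Sv z : sigma z -> z <> y -> Sv (join (star z) s0).
  move=> sz zy; apply: (proj2 (proj1 y_s0)); first exact/Sv_star/(F_Sv Fs sz).
    exact: F_le_star Fs sy sz (nesym zy).
  by move/star_inj.
have gxx : le (g x) x by apply: le_starL; exact: join_ubl.
pose L' := [seq g z | z <- L & propb (z <> y)].
apply: above_rooted_up (IHn L' tau (g x) _ Ftau (tau_others x sx (nesym yx)) _ _) (F_Sv Fs sx) gxx.
- rewrite size_map; apply: leq_trans szL; apply: size_filter_lt (bad_in y sy yx ry) _.
  by apply/negP => /propbP.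
- move=> u tu ugx; case: (tau_cases u tu) => [->|[z [sz zy] eu]]; first exact: rooted_above.
  have zx : z <> x by move=> e; apply: ugx; rewrite eu e.
  rewrite eu /g starK; apply: above_rooted_up (others z sz zx) (join_Sv z sz zy) (join_ubl _ _).
- move=> u tu ugx ru; case: (tau_cases u tu) => [eu|[z [sz zy] eu]]; first by case: ru; rewrite eu.
  have zx : z <> x by move=> e; apply: ugx; rewrite eu e.
  rewrite eu; apply: List.in_map; apply/List.filter_In; split; last exact/propbP.
  apply: (bad_in z sz zx) => rsz; apply: ru; rewrite eu /g starK.
  apply: rooted_shift y_nt y_nd y_s0 ry _ rsz _ _; first exact: F_le_star Fs sy sz (nesym zy).
  by move/star_inj.
Qed.

Lemma above_rooted_of_star sigma x : F sigma -> sigma x ->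
  (forall y, sigma y -> y <> x -> above_rooted F (star y)) -> above_rooted F x.
Proof.
move=> Fs sx others; apply: (above_rooted_of_star_list (L := l) Fs sx others).
by move=> y sy _ _; apply: Sv_fin; exact: F_Sv sy.
Qed.

Lemma star_nondegenerate sigma d : F sigma -> sigma d -> d <> star d.
Proof.
move=> Fs sd d_dg.
suff rd : rooted F d by apply: (no_pair rd); rewrite -d_dg.
apply: (Rooted Fs sd) => y sy yd.
have yd_le : le y d by have := F_le_star Fs sy sd yd; rewrite -d_dg.
have dy_le : le d (star y) := F_le_star Fs sd sy (nesym yd).
have y_tr : trivial_in le star Sv y.
  exists d; split; first exact: F_Sv sd.
  by rewrite -d_dg; split; split.
case: (F_std (F_Sv Fs sy) y_tr) => [Fy|y_dg]; first exact: rooted_forced.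
by case: yd; apply: le_anti yd_le _; rewrite y_dg.
Qed.

Lemma unrooted_tangle : (forall x, ~ undecided F x) -> tangle le star Sv F (unrooted F).
Proof.
move=> decided.
have other_side y : Sv y -> ~ above_rooted F y -> y <> star y -> above_rooted F (star y).
  by move=> Sy nry y_nd; apply: NNPP => nrsy; apply: (decided y).
split; [split|split].
- by move=> x [].
- move=> x Sx; split.
    case: (classic (above_rooted F x)) => rx; last by left.
    by right; split; [exact: Sv_star | exact: above_rooted_no_pair].
  by move=> x_nd [[_ nrx] [_ nrsx]]; apply: (decided x).
- move=> [a [b [[Sa nra] [[Sb nrb] [[ab_le ab_ne] ab_diff]]]]].
  case: (classic (a = star a)) => a_dg; last first.
    by apply: nrb; apply: above_rooted_up (other_side a Sa nra a_dg) Sb ab_le.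
  case: (classic (b = star b)) => b_dg; last first.
    by apply: nra; apply: above_rooted_up (other_side b Sb nrb b_dg) Sa (le_starL ab_le).
  apply: ab_diff; left; apply: le_anti.
    by have := le_starL ab_le; rewrite -b_dg.
  by rewrite {1}a_dg.
- move=> [sigma [Fs s_un]].
  have [[x sx] _] := proj1 (F_stars Fs).
  apply: (proj2 (s_un x sx)); apply: (above_rooted_of_star Fs sx) => y sy _.
  have [Sy nry] := s_un y sy; apply: other_side => //; exact: star_nondegenerate Fs sy.
Qed.

Section Undecided.
Variable x : U.
Hypothesis x_und : undecided F x.
Hypothesis x_min : forall y, undecided F y -> ~ lt le y x.

Definition add_rooted sigma := F sigma \/
  (exists z, above_rooted F z /\ sigma = (fun u => u = z)) \/ sigma = (fun u => u = star x).

Lemma undecided_unforced : ~ forces star F x.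
Proof.
case: x_und => Sx _ nrsx x_nd [Fx|//].
by apply: nrsx; apply: rooted_above; exact: rooted_forced.
Qed.

Lemma undecided_nontrivial : ~ trivial_in le star Sv x.
Proof. by case: x_und => Sx _ _ _; case: (unforced_nontrivial Sx undecided_unforced). Qed.

Lemma above_star_undecided z : Sv z -> le (star x) z -> above_rooted F z \/ z = star x.
Proof.
case: x_und => Sx nrx nrsx x_nd Sz sxz.
case: (classic (above_rooted F z)) => rz; first by left.
case: (classic (z = star x)) => zsx; first by right.
exfalso; have szx : le (star z) x by exact: le_starL.
have nrsz : ~ above_rooted F (star z) by move=> rsz; apply: nrx; exact: above_rooted_up rsz Sx szx.
case: (classic (star z = z)) => z_dg.
  apply: (x_min (y := star x)); first by split; rewrite ?starK //; [exact: Sv_star | exact/nesym].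
  split; first by apply: le_trans sxz _; rewrite -z_dg.
  by move=> e; apply: x_nd; rewrite e.
apply: (x_min (y := star z)); first by split; rewrite ?starK //; exact: Sv_star.
by split=> // e; apply: zsx; rewrite -e starK.
Qed.

Lemma reroot_add_rooted w : rooted add_rooted w -> rooted add_rooted (star w) ->
  above_rooted F w \/ rooted add_rooted x.
Proof.
elim=> {w} sigma w Hs sw r_others IH rsw.
case: Hs => [Fs|[[z [rz es]]|es]]; last 2 first.
- by left; move: sw; rewrite es => ->.
- by right; move: rsw; move: sw; rewrite es => ->; rewrite starK.
case: (classic (exists y, [/\ sigma y, y <> w & ~ above_rooted F (star y)])) =>
  [[y [sy yw nry]]|all_above]; last first.
  left; apply: (above_rooted_of_star Fs sw) => y sy yw.
  by apply: NNPP => nry; apply: all_above; exists y.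
have := IH y sy yw; rewrite starK; case=> [|ry|rx]; last by right.
- apply: (Rooted (or_introl Fs) sy) => y' sy' y'y.
  by case: (classic (y' = w)) => [->|y'w] //; exact: r_others.
- by case: nry.
Qed.

Lemma above_x_add_rooted w : rooted add_rooted w -> le x w -> w <> star x -> above_rooted F w.
Proof.
elim=> {w} sigma w Hs sw _ IH xw wsx.
case: Hs => [Fs|[[z [rz es]]|es]]; last 2 first.
- by move: sw; rewrite es => ->.
- by move: sw; rewrite es.
apply: (above_rooted_of_star Fs sw) => y sy yw; apply: IH => //.
  by apply: le_trans xw _; exact: F_le_star Fs sw sy (nesym yw).
move/star_inj => yx; subst y.
have xsw : le x (star w) by apply: le_starR; exact: F_le_star Fs sw sy (nesym yw).
by case: (nontrivial_le_both undecided_nontrivial (F_Sv Fs sw) xw xsw) => e; [case: yw | case: wsx].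
Qed.

Lemma add_above_no_pair w : rooted (add_above F x) w -> ~ rooted (add_above F x) (star w).
Proof.
have sub sigma : add_above F x sigma -> add_rooted sigma.
  case=> [Fs|[z [Sz [sxz ->]]]]; first by left.
  by case: (above_star_undecided Sz sxz) => [rz|->]; right; [left; exists z | right].
move=> /(rooted_sub sub) rw /(rooted_sub sub) rsw.
have nrx : ~ rooted add_rooted x.
  move=> rx; case: x_und => _ nrx _ x_nd; exact: nrx (above_x_add_rooted rx (le_refl x) x_nd).
case: (reroot_add_rooted rw rsw) => [aw|//].
case: (reroot_add_rooted rsw) => [|asw|//]; first by rewrite starK.
exact: above_rooted_no_pair aw asw.
Qed.

End Undecided.
End Separable.
End Rooted.

Lemma forces_add_above F x y : forces star F y -> forces star (add_above F x) y.
Proof. by case=> [Fy|y_dg]; [left; left | right]. Qed.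

Lemma add_above_stars F x : star_family F -> star_family (add_above F x).
Proof.
move=> F_stars sigma [Fs|[z [Sz [_ ->]]]]; first exact: F_stars.
by split; [split; [exists z | move=> a b -> ->] | move=> u ->].
Qed.

Lemma add_above_standard F x : standard le star Sv F -> standard le star Sv (add_above F x).
Proof. by move=> F_std y Sy y_tr; apply: forces_add_above; exact: F_std. Qed.

Lemma F_linked_add_above F x s0 r : ~ trivial_in le star Sv r ->
  F_linked le star join Sv F s0 r -> F_linked le star join Sv (add_above F x) s0 r.
Proof.
move=> r_nt [r_s0 r_F]; split=> // sigma s_star [Fs|[z [Sz [sxz ->]]]] s_geq s_r.
  by left; apply: r_F.
have [_ zsr] := s_geq z erefl.
have rz : le r z by case: s_r => y [<-].
right; exists (join z s0); split; first exact: (proj2 r_s0).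
split; first by apply: le_trans sxz _; exact: join_ubl.
apply: pred_eq => u; split; last by move=> ->; exists z; split=> //; left.
move=> [_ [-> [[_ [_ ->]]|[rsz [szsr _]]]]] //.
by case: (nontrivial_le_both r_nt Sz rz rsz) => e; [case: szsr; rewrite e | case: zsr].
Qed.

Lemma add_above_separable F x : standard le star Sv F ->
  F_separable le star join Sv F -> F_separable le star join Sv (add_above F x).
Proof.
move=> F_std F_sep r r' Sr Sr' rr' r_uf sr'_uf.
have {}r_uf : ~ forces star F r by move/(forces_add_above x).
have {}sr'_uf : ~ forces star F (star r') by move/(forces_add_above x).
have [s0 [Ss0 [r_s0 sr'_s0]]] := F_sep r r' Sr Sr' rr' r_uf sr'_uf.
exists s0; split=> //; split; apply: F_linked_add_above => //.
- exact: proj1 (unforced_nontrivial F_std Sr r_uf).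
- exact: proj1 (unforced_nontrivial F_std (Sv_star Sr') sr'_uf).
Qed.

Lemma rooted_pair_or_tangle l F : (forall x, Sv x -> List.In x l) -> star_family F ->
  standard le star Sv F -> F_separable le star join Sv F ->
  (exists w, rooted F w /\ rooted F (star w)) \/ exists O, tangle le star Sv F O.
Proof.
move=> Sv_fin; have [n] := ubnP (count_in l (fun z => ~ forces star F z)).
elim: n F => // n IHn F; rewrite ltnS => cntF F_stars F_std F_sep.
case: (classic (exists w, rooted F w /\ rooted F (star w))) => [|no_pair]; first by left.
have {}no_pair w : rooted F w -> ~ rooted F (star w) by move=> rw rsw; apply: no_pair; exists w.
case: (classic (exists x, undecided F x)) => [[x0 ux0]|decided]; last first.
  right; exists (unrooted F); apply: (unrooted_tangle F_stars Sv_fin F_std F_sep no_pair).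
  by move=> x ux; apply: decided; exists x.
have undecided_in y : undecided F y -> List.In y l by case=> Sy _ _ _; exact: Sv_fin.
have [x [ux x_min]] := finite_minimal undecided_in lt_trans (fun y yy => proj2 yy erefl) ux0.
have cnt_lt : count_in l (fun z => ~ forces star (add_above F x) z) <
              count_in l (fun z => ~ forces star F z).
  apply: (count_in_lt (z := x)) => [z z_uf /(forces_add_above x) //| | |].
  - exact: undecided_in.
  - exact: (undecided_unforced F_stars ux).
  - apply; left; right; exists (star x); split; first by case: ux => Sx _ _ _; exact: Sv_star.
    by split; first exact: le_refl.
case: (IHn (add_above F x)) => //.
- exact: leq_trans cnt_lt cntF.
- exact: add_above_stars.
- exact: add_above_standard.
- exact: add_above_separable.
- move=> [w [rw rsw]].
  by case: (add_above_no_pair F_stars Sv_fin F_std F_sep no_pair ux x_min rw rsw).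
- move=> [O [O_or [O_con O_av]]]; right; exists O; split=> //; split=> // [[sigma [Fs s_O]]].
  by apply: O_av; exists sigma; split=> //; left.
Qed.
End Universe.

Section PTrees.
Variables (U : Type) (star : U -> U) (Sv : U -> Prop) (F : (U -> Prop) -> Prop).
Hypothesis star_invol : forall x, star (star x) = x.
Hypothesis Sv_star : forall x, Sv x -> Sv (star x).
Hypothesis F_sub_Sv : forall sigma x, F sigma -> sigma x -> Sv x.

(* Nodes are [0 <= i < psize T]; a node [i > 0] hangs below [parent T i < i], and
   [label T i] orients the edge between them towards [i]. [label T 0] is the label of a
   phantom edge pointing into the root. *)
Record ptree := PTree { psize : nat; parent : nat -> nat; label : nat -> U }.

Definition child_star T t u :=
  exists j, [/\ 0 < j < psize T, parent T j = t & u = star (label T j)].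

Definition node_star T t u := u = label T t \/ child_star T t u.

Definition edge_star T t u := 0 < t /\ u = label T t \/ child_star T t u.

Definition parents_ok T := forall i, 0 < i -> i < psize T -> parent T i < i.

Definition labels_ok T := forall i, i < psize T -> Sv (label T i).

Definition rooted_ptree w T := [/\ 0 < psize T, label T 0 = w, parents_ok T, labels_ok T &
  forall t, 0 < t < psize T -> F (node_star T t)].

Lemma edge_star_pos T t : 0 < t -> edge_star T t = node_star T t.
Proof.
move=> t_gt0; apply: pred_eq => u.
by split=> [[[_ ->]|]|[->|]]; [left | right | left | right].
Qed.

Lemma ptree_S_tree T : 1 < psize T -> parents_ok T -> labels_ok T ->
  (forall t, t < psize T -> F (edge_star T t)) -> exists_S_tree_over star Sv F.
Proof.
move=> T_gt1 par_ok lab_ok T_F.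
have T_gt0 : 0 < psize T by exact: ltnW.
pose e := parent_rel (n := psize T) (parent T).
pose alpha (i j : 'I_(psize T)) :=
  if (parent T j == i) && (0 < j) then label T j else star (label T i).
have no_2cycle (i j : 'I_(psize T)) : parent T j = i -> 0 < j -> parent T i = j -> 0 < i -> False.
  by move=> pj j0 pi i0; have := par_ok j j0 (ltn_ord j); have := par_ok i i0 (ltn_ord i); lia.
have e_star t u : (exists y, e y t /\ u = alpha y t) <-> edge_star T t u.
  split=> [[y [eyt ->]]|[[t0 ->]|[j [/andP [j0 jT] pj ->]]]].
  - move: eyt; rewrite /e /parent_rel /alpha => /orP [/andP [/eqP pt t0]|/andP [/eqP py y0]].
      by left; rewrite pt eqxx t0.
    case: ifP => [/andP [/eqP pt t0]|_]; first by case: (no_2cycle _ _ pt t0 py y0).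
    by right; exists y; rewrite y0 ltn_ord.
  - have pT : parent T t < psize T by apply: ltn_trans (par_ok t t0 (ltn_ord t)) _.
    by exists (Ordinal pT); rewrite /e /parent_rel /alpha /= eqxx t0.
  - exists (Ordinal jT); rewrite /e /parent_rel /alpha /= pj eqxx j0 orbT; split=> //.
    by case: ifP => // /andP [/eqP pt t0]; case: (no_2cycle t (Ordinal jT) pj j0 pt t0).
exists 'I_(psize T), e, alpha; split; first exact: parent_rel_tree.
split.
  exists (Ordinal T_gt0), (Ordinal T_gt1); rewrite /e /parent_rel /=.
  by have := par_ok 1 isT T_gt1; rewrite ltnS leqn0 => /eqP ->.
split; last first.
  by move=> t; rewrite (_ : (fun u => _) = edge_star T t); [exact: T_F | exact: pred_eq].
move=> x y; rewrite /e /parent_rel /alpha => /orP [/andP [/eqP py y0]|/andP [/eqP px x0]].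
  rewrite py eqxx y0; case: ifP => [/andP [/eqP px x0]|_].
    by case: (no_2cycle _ _ py y0 px x0).
  by split=> //; exact: lab_ok.
case: ifP => [/andP [/eqP py y0]|_]; first by case: (no_2cycle _ _ py y0 px x0).
by rewrite px eqxx x0 star_invol; split=> //; apply/Sv_star/lab_ok.
Qed.

Definition attach A C := PTree (psize A + psize C)
  (fun i => if i < psize A then parent A i else if i == psize A then 0
            else psize A + parent C (i - psize A))
  (fun i => if i < psize A then label A i else label C (i - psize A)).

Lemma attach_parents_ok A C :
  0 < psize A -> parents_ok A -> parents_ok C -> parents_ok (attach A C).
Proof.
move=> A_gt0 parA parC i i_gt0 /= iAC; rewrite /attach /=.
case: ifP => [iA|/negbT iA]; first exact: parA.
by case: eqP => [|iA']; [lia | have := parC (i - psize A); lia].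
Qed.

Lemma attach_labels_ok A C : labels_ok A -> labels_ok C -> labels_ok (attach A C).
Proof.
move=> labA labC i iAC; rewrite /attach /=.
by case: ifP => [iA|/negbT iA]; [exact: labA | apply: labC; move: iAC => /=; lia].
Qed.

Lemma child_star_attach_lo A C t u : 0 < psize A -> 0 < psize C -> t < psize A ->
  child_star (attach A C) t u <-> child_star A t u \/ t = 0 /\ u = star (label C 0).
Proof.
move=> A_gt0 C_gt0 tA; rewrite /child_star /attach /=; split.
  case=> j [/andP [j0 jAC] pj ->]; move: pj.
  case: ifP => [jA pj|/negbT jA]; first by left; exists j; rewrite j0.
  by case: eqP => [-> <-|jA' pj]; [right; rewrite subnn | lia].
case=> [[j [/andP [j0 jA] pj ->]]|[-> ->]].
  by exists j; rewrite j0 jA /= pj; split=> //; lia.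
by exists (psize A); rewrite ltnn eqxx subnn A_gt0 /=; split=> //; lia.
Qed.

Lemma child_star_attach_hi A C t u : 0 < psize A -> parents_ok A ->
  child_star (attach A C) (psize A + t) u <-> child_star C t u.
Proof.
move=> A_gt0 parA; rewrite /child_star /attach /=; split.
  case=> j [/andP [j0 jAC] pj ->]; move: pj.
  case: ifP => [jA|/negbT jA]; first by have := parA j; lia.
  case: eqP => [_|jA' pj]; first lia.
  by exists (j - psize A); split=> //; lia.
case=> j [/andP [j0 jC] pj ->].
have [jA jA'] : (psize A + j < psize A) = false /\ (psize A + j == psize A) = false by lia.
by exists (psize A + j); rewrite jA jA' addKn pj; split=> //; lia.
Qed.

Lemma node_star_attach_lo A C t u : 0 < psize A -> 0 < psize C -> t < psize A ->
  node_star (attach A C) t u <-> node_star A t u \/ t = 0 /\ u = star (label C 0).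
Proof.
move=> A_gt0 C_gt0 tA; rewrite /node_star child_star_attach_lo //= tA.
by split=> [[|[|]]|[[|]|]]; auto.
Qed.

Lemma node_star_attach_hi A C t u : 0 < psize A -> parents_ok A ->
  node_star (attach A C) (psize A + t) u <-> node_star C t u.
Proof.
move=> A_gt0 parA; rewrite /node_star child_star_attach_hi //= ltnNge leq_addr addKn.
by [].
Qed.

Lemma attach_node_star_F A C : 0 < psize A -> 0 < psize C -> parents_ok A ->
  (forall t, 0 < t < psize A -> F (node_star A t)) ->
  (forall t, t < psize C -> F (node_star C t)) ->
  forall t, 0 < t < psize A + psize C -> F (node_star (attach A C) t).
Proof.
move=> A_gt0 C_gt0 parA A_F C_F t /andP [t_gt0 tAC].
case: (ltnP t (psize A)) => [tA|At].
  rewrite (_ : node_star _ t = node_star A t); first by apply: A_F; rewrite t_gt0.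
  by apply: pred_eq => u; rewrite node_star_attach_lo //; split=> [[|[t0]]|]; [ | lia | left].
have [d ed] : exists d, t = psize A + d by exists (t - psize A); lia.
subst t; rewrite (_ : node_star _ _ = node_star C d); first by apply: C_F; lia.
by apply: pred_eq => u; exact: node_star_attach_hi.
Qed.

Lemma graft_children w sigma (l0 : list U) : Sv w ->
  (forall y, sigma y -> y <> w -> exists C, rooted_ptree (star y) C /\ F (node_star C 0)) ->
  exists T, rooted_ptree w T /\
    forall u, node_star T 0 u <-> u = w \/ [/\ List.In u l0, sigma u & u <> w].
Proof.
move=> Sw children; elim: l0 => [|y l0 [T [[T_gt0 T_w parT labT T_F] T_root]]].
  exists (PTree 1 (fun _ => 0) (fun _ => w)); split.
    by split=> // t /=; lia.
  move=> u; rewrite /node_star /child_star /=.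
  by split=> [[->|[j [/andP [j0 j1] _ _]]]|[->|[]]]; [left | lia | left |].
case: (classic (sigma y /\ y <> w)) => [[sy yw]|not_child]; last first.
  exists T; split=> // u; rewrite T_root /=.
  split=> [[->|[ul0 su uw]]|[->|[[eyu|ul0] su uw]]]; [by left | by right; split=> //; right |
    by left | by case: not_child; rewrite eyu | by right].
have [C [[C_gt0 C_sy parC labC C_F] C_root]] := children y sy yw.
exists (attach T C); split; last first.
  move=> u; rewrite node_star_attach_lo // T_root C_sy star_invol /=.
  split=> [[[->|[ul0 su uw]]|[_ ->]]|[->|[[<-|ul0] su uw]]].
  - by left.
  - by right; split=> //; right.
  - by right; split=> //; left.
  - by left; left.
  - by right.
  - by left; right.
split=> //=; [by rewrite addn_gt0 T_gt0 | by rewrite T_gt0 | exact: attach_parents_ok |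
  exact: attach_labels_ok | ].
apply: attach_node_star_F => // t; case: (posnP t) => [->|t_gt0] // tC.
by apply: C_F; rewrite t_gt0.
Qed.

Lemma rooted_ptree_of_rooted (l : list U) w : (forall x, Sv x -> List.In x l) ->
  rooted star F w -> exists T, rooted_ptree w T /\ F (node_star T 0).
Proof.
move=> Sv_fin; elim=> {w} sigma w Fs sw _ IH.
have [T [T_w T_root]] := graft_children l (F_sub_Sv Fs sw) IH.
exists T; split=> //; rewrite (_ : node_star T 0 = sigma) //; apply: pred_eq => u.
rewrite T_root; split=> [[->|[]]//|su].
by case: (classic (u = w)) => [->|uw]; [left | right; split=> //; apply/Sv_fin/(F_sub_Sv Fs su)].
Qed.

Lemma rooted_pair_S_tree (l : list U) w : (forall x, Sv x -> List.In x l) ->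
  rooted star F w -> rooted star F (star w) -> exists_S_tree_over star Sv F.
Proof.
move=> Sv_fin rw rsw.
have [A [[A_gt0 A_w parA labA A_F] A_root]] := rooted_ptree_of_rooted Sv_fin rw.
have [C [[C_gt0 C_sw parC labC C_F] C_root]] := rooted_ptree_of_rooted Sv_fin rsw.
apply: (@ptree_S_tree (attach A C)) => /=; [lia | exact: attach_parents_ok |
  exact: attach_labels_ok | move=> t tAC].
case: (posnP t) => [->|t_gt0].
  rewrite (_ : edge_star _ 0 = node_star A 0) //; apply: pred_eq => u.
  rewrite /edge_star /node_star child_star_attach_lo // C_sw star_invol A_w.
  by split=> [[[]|[|[_ ->]]]|[->|]]; auto.
rewrite edge_star_pos //; apply: attach_node_star_F; rewrite ?t_gt0 //.
by move=> d; case: (posnP d) => [->|d_gt0] // dC; apply: C_F; rewrite d_gt0.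
Qed.
End PTrees.

Lemma S_tree_no_tangle (U : Type) (le : U -> U -> Prop) (star : U -> U) (Sv : U -> Prop)
  (F : (U -> Prop) -> Prop) (O : U -> Prop) :
  exists_S_tree_over star Sv F -> ~ tangle le star Sv F O.
Proof.
move=> [V [e [alpha [e_tree [[t0 _] [e_alpha e_F]]]]]] [[_ O_orient] [_ O_avoid]].
case: (classic (exists t, forall y, e y t -> O (alpha y t))) => [[t t_O]|no_node].
  apply: O_avoid; exists (fun u => exists y, e y t /\ u = alpha y t).
  by split=> // u [y [eyt ->]]; exact: t_O.
have out t : exists y, e y t /\ ~ O (alpha y t).
  apply: NNPP => none; apply: no_node; exists t => y eyt.
  by apply: NNPP => nO; apply: none; exists y.
pose s t := proj1_sig (constructive_indefinite_description _ (out t)).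
have s_spec t : e (s t) t /\ ~ O (alpha (s t) t).
  by rewrite /s; case: constructive_indefinite_description.
have [u ssu] := tree_walk_backtracks t0 e_tree (fun t => proj1 (s_spec t)).
have [e_su nO_su] := s_spec u; have [_ nO_ssu] := s_spec (s u); rewrite ssu in nO_ssu.
have [S_su alpha_sym] := e_alpha _ _ e_su.
by case: (proj1 (O_orient _ S_su)) => //; rewrite -alpha_sym.
Qed.

Theorem theorem4p4 (U : Type) (le : U -> U -> Prop) (star : U -> U)
  (join meet : U -> U -> U) (Sv : U -> Prop) (F : (U -> Prop) -> Prop) :
  is_universe le star join meet ->
  is_subsystem star Sv ->
  finite_sys Sv ->
  (forall sigma, F sigma -> is_star le star sigma /\ (forall x, sigma x -> Sv x)) ->
  standard le star Sv F ->
  F_separable le star join Sv F ->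
  (exists_S_tree_over star Sv F \/ (exists O, tangle le star Sv F O)) /\
  ~ (exists_S_tree_over star Sv F /\ (exists O, tangle le star Sv F O)).
Proof.
move=> univ Sv_star [l Sv_fin] F_stars F_std F_sep.
split; last by case=> tree [O tO]; exact: S_tree_no_tangle tree tO.
case: (rooted_pair_or_tangle univ Sv_star Sv_fin F_stars F_std F_sep) => [[w [rw rsw]]|];
  last by right.
left; apply: (rooted_pair_S_tree (starK univ) Sv_star _ Sv_fin rw rsw).
by move=> sigma x Fs; apply: (proj2 (F_stars _ Fs)).
Qed.
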